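(* Let $D\subseteq\Phi^+$ be a rook placement. Then the subspace $\mathfrak{p}\subseteq\mathfrak{n}$ spanned by the $e_{j,i}$, $(i,j)\in\Phi^+\setminus\mathcal{M}$, is a Lie subalgebra of $\mathfrak{n}$.
   Context: Let $n\ge1$ and let $\mathfrak{n}$ be the Lie algebra of strictly upper-triangular complex $n\times n$ matrices; $e_{i,j}$ denotes the elementary matrix with $1$ at position $(i,j)$. Let $\Phi^+=\{(i,j)\in\mathbb{Z}^2:1\le j<i\le n\}$, with rows $\mathcal{R}_k=\{(k,s)\in\Phi^+\}$ and columns $\mathcal{C}_k=\{(r,k)\in\Phi^+\}$. A rook placement is a subset $D\subseteq\Phi^+$ with $|D\cap\mathcal{R}_k|\le 1$ and $|D\cap\mathcal{C}_k|\le1$ for all $k$. Write $D=\{(i_1,j_1),\dots,(i_s,j_s)\}$ with $j_1<\dots<j_s$. Set $\mathcal{M}_{j_0}=\emptyset$ and, recursively for $r=1,\dots,s$, $\mathcal{M}_{j_r}=\{(i_r,q)\in\Phi^+:\ j_r<q<i_r,\ (q,j_r)\notin\bigcup_{l=0}^{r-1}\mathcal{M}_{j_l}\}$, and $\mathcal{M}=\bigcup_{r=1}^s\mathcal{M}_{j_r}$. *)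

From HB Require Import structures.
From mathcomp Require Import all_boot all_order all_algebra.
Set Implicit Arguments. Unset Strict Implicit. Unset Printing Implicit Defensive.
Import GRing.Theory.

(* Indices are 0-based: 'I_n = {0,...,n-1} stands for {1,...,n}. *)

Definition Phi (n : nat) : {set 'I_n * 'I_n} := [set p : 'I_n * 'I_n | (p.2 : nat) < p.1].

Definition rook_placement (n : nat) (D : {set 'I_n * 'I_n}) : bool :=
  [&& D \subset Phi n,
      [forall k : 'I_n, #|[set p in D | p.1 == k]| <= 1]
    & [forall k : 'I_n, #|[set p in D | p.2 == k]| <= 1]].

(* M_{j} for the column j = k (as a nat) of a root (i_r, j_r) of D, given the
   union S of the previously built M_{j_l} (those with j_l < j_r):
   { (i_r, q) : j_r < q < i_r, (q, j_r) \notin S }. *)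
Definition Mcol (n : nat) (D S : {set 'I_n * 'I_n}) (k : nat)
  : {set 'I_n * 'I_n} :=
  [set p : 'I_n * 'I_n | [exists j : 'I_n,
     [&& nat_of_ord j == k, (p.1, j) \in D, j < p.2, p.2 < p.1
       & (p.2, j) \notin S]]].

Fixpoint Mupto (n : nat) (D : {set 'I_n * 'I_n}) (k : nat)
  : {set 'I_n * 'I_n} :=
  match k with
  | 0 => set0
  | k'.+1 => Mupto D k' :|: Mcol D (Mupto D k') k'
  end.

Definition Mset (n : nat) (D : {set 'I_n * 'I_n}) : {set 'I_n * 'I_n} :=
  Mupto D n.

Definition pspace (F : fieldType) (n : nat) (D : {set 'I_n * 'I_n})
  : {vspace 'M[F]_(n, n)} :=
  (<< [seq (delta_mx p.2 p.1 : 'M[F]_(n, n)) | p <- enum (Phi n :\: Mset D)%SET] >>)%VS.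

From HB Require Import structures.
From mathcomp Require Import all_boot all_order all_algebra.
Import GRing.Theory.

(* For a set S of index pairs, call "pattern space" of S the span
   of the matrix units e_{j,i}, (i,j) \in S; it consists exactly of the
   matrices whose nonzero entries (j,i) all have (i,j) \in S.  If S is closed
   under composition of pairs ((k,i), (j,k) \in S imply (j,i) \in S), the
   product of two matrices of its pattern space stays in it, so the pattern
   space is an associative subalgebra and a fortiori closed under commutators.
   The theorem thus reduces to a purely combinatorial fact about M: the set
   Phi^+ \ M is closed under composition.  Equivalently, for a < b < d, if
   (d,a) \in M then (b,a) \in M or (d,b) \in M; this is proved by strong
   induction on a from the recursive description of M ("(p1,p2) \in M iff some
   root (p1,j) of D has j < p2 < p1 and (p2,j) \notin M").
   Note that the argument never uses that D is a rook placement. *)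

Section RecursiveDescription.
Variables (n : nat) (D : {set 'I_n * 'I_n}).

Lemma MuptoE k (p : 'I_n * 'I_n) : (p \in Mupto D k) =
  [exists j : 'I_n, [&& (j < k)%N, (p.1, j) \in D, (j < p.2)%N, (p.2 < p.1)%N
     & (p.2, j) \notin Mupto D j]].
Proof.
elim: k => [|k IH] /=.
  by rewrite in_set0; apply/esym/existsP => -[j].
rewrite in_setU IH in_set; apply/idP/existsP.
- case/orP => /existsP [j /and5P [jk pjD jp2 p21 p2j]]; exists j.
    by rewrite pjD jp2 p21 p2j ltnS ltnW.
  by move/eqP: jk p2j => <- p2j; rewrite pjD jp2 p21 p2j ltnSn.
- case=> j /and5P [jk pjD jp2 p21 p2j].
  rewrite ltnS leq_eqVlt in jk; case/orP: jk => [/eqP jk | jk].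
    by apply/orP; right; apply/existsP; exists j; rewrite -jk eqxx pjD jp2 p21 p2j.
  by apply/orP; left; apply/existsP; exists j; rewrite jk pjD jp2 p21 p2j.
Qed.

Lemma Mupto_stable (q : 'I_n * 'I_n) k k' : (q.2 <= k)%N -> (q.2 <= k')%N ->
  (q \in Mupto D k) = (q \in Mupto D k').
Proof.
move=> q2k q2k'; rewrite !MuptoE; apply: eq_existsb => j.
case: (ltnP j q.2) => [jq2 | ]; last by rewrite !andbF.
by rewrite (leq_trans jq2 q2k) (leq_trans jq2 q2k').
Qed.

Lemma MsetE (p : 'I_n * 'I_n) : (p \in Mset D) =
  [exists j : 'I_n, [&& (p.1, j) \in D, (j < p.2)%N, (p.2 < p.1)%N
     & (p.2, j) \notin Mset D]].
Proof.
rewrite /Mset MuptoE; apply: eq_existsb => j.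
by rewrite ltn_ord /= (@Mupto_stable (p.2, j) j n) // ltnW.
Qed.

Lemma Mset_split {a b d : 'I_n} : (a < b)%N -> (b < d)%N ->
  (d, a) \in Mset D -> ((b, a) \in Mset D) || ((d, b) \in Mset D).
Proof.
have [m] := ubnP (a : nat); elim: m => // m IH in a b d *; rewrite ltnS => am ab bd.
rewrite MsetE => /existsP [c /and4P [dcD ca _ acM]] /=; simpl in *.
case dbM: ((d, b) \in Mset D); first by rewrite orbT.
(* The root (d,c) with c < b < d would put (d,b) in M unless (b,c) \in M. *)
have bcM : (b, c) \in Mset D.
  apply: contraFT dbM => bcM; rewrite MsetE; apply/existsP; exists c.
  by rewrite /= dcD bcM bd (ltn_trans ca ab).
move: bcM; rewrite MsetE => /existsP [j /and4P [bjD jc _ cjM]]; simpl in *.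
(* The root (b,j) of (b,c) witnesses (b,a) \in M; (a,j) \notin M by induction,
   since (a,j) \in M would split into (c,j) or (a,c), both outside M. *)
rewrite orbF MsetE; apply/existsP; exists j.
rewrite /= bjD ab (ltn_trans jc ca) /=.
apply/negP => ajM.
have := IH j c a (leq_trans (ltn_trans jc ca) am) jc ca ajM.
by rewrite (negbTE cjM) (negbTE acM).
Qed.

Lemma notM_comp (i k j : 'I_n) :
  (k, i) \in (Phi n :\: Mset D)%SET -> (j, k) \in (Phi n :\: Mset D)%SET ->
  (j, i) \in (Phi n :\: Mset D)%SET.
Proof.
rewrite !inE /= => /andP [kiM ik] /andP [jkM kj].
rewrite (ltn_trans ik kj) andbT; apply/negP => jiM.
by have := Mset_split ik kj jiM; rewrite (negbTE kiM) (negbTE jkM).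
Qed.

End RecursiveDescription.

Section PatternSpace.
Local Open Scope ring_scope.
Variables (F : fieldType) (n : nat) (S : {set 'I_n * 'I_n}).

Definition pattern_space : {vspace 'M[F]_(n, n)} :=
  (<< [seq (delta_mx p.2 p.1 : 'M[F]_(n, n)) | p <- enum S] >>)%VS.

Lemma sum_nonzero_term (I : finType) (f : I -> F) :
  \sum_i f i != 0 -> exists i, f i != 0.
Proof.
move=> sum_nz; apply/existsP; apply: contraR sum_nz.
rewrite negb_exists => /forallP f0.
by apply/eqP/big1 => i _; apply/eqP; move: (f0 i); rewrite negbK.
Qed.

Lemma pattern_spaceP (A : 'M[F]_(n, n)) :
  reflect (forall i j, A i j != 0 -> (j, i) \in S) (A \in pattern_space).
Proof.
apply: (iffP idP) => [A_in i j | A_supp].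
  rewrite (coord_span (X := in_tuple _) A_in) summxE.
  case/sum_nonzero_term => k; rewrite !mxE.
  have /mapP [p p_in ->] := mem_nth 0 (ltn_ord k).
  rewrite mxE mulf_eq0 negb_or => /andP [_].
  case: andP => [[/eqP -> /eqP ->] _ | _]; last by rewrite eqxx.
  by rewrite -mem_enum; case: p p_in.
rewrite (matrix_sum_delta A); apply: memv_suml => i _; apply: memv_suml => j _.
have [->|Aij] := eqVneq (A i j) 0; first by rewrite scale0r mem0v.
apply/memvZ/memv_span/mapP; exists (j, i) => //.
by rewrite mem_enum; apply: A_supp.
Qed.

Hypothesis S_comp : forall i k j, (k, i) \in S -> (j, k) \in S -> (j, i) \in S.

Lemma pattern_space_mul (A B : 'M[F]_(n, n)) :
  A \in pattern_space -> B \in pattern_space -> A *m B \in pattern_space.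
Proof.
move=> /pattern_spaceP A_supp /pattern_spaceP B_supp.
apply/pattern_spaceP => i j; rewrite mxE => /sum_nonzero_term [k].
rewrite mulf_eq0 negb_or => /andP [Aik Bkj].
exact: S_comp (A_supp _ _ Aik) (B_supp _ _ Bkj).
Qed.

Lemma pattern_space_commutator (A B : 'M[F]_(n, n)) :
  A \in pattern_space -> B \in pattern_space ->
  A *m B - B *m A \in pattern_space.
Proof. by move=> A_in B_in; rewrite memvB ?pattern_space_mul. Qed.

End PatternSpace.

Theorem proposition2p6 (F : fieldType) (n : nat) (D : {set 'I_n * 'I_n}) :
  0 < n -> rook_placement D ->
  forall A B : 'M[F]_(n, n), A \in pspace F D -> B \in pspace F D ->
    (A *m B - B *m A)%R \in pspace F D.
Proof.
move=> _ _ A B.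
exact: (@pattern_space_commutator F n _ (@notM_comp n D) A B).
Qed.
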